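(* Let $G=(L\cup R,E)$ be a $(c,d,\alpha,\delta)$-bipartite expander with $L=[n]$, and $C_0\subseteq\mathbb{F}_2^d$ a linear code of minimum distance $d_0\ge2$. Let $x\in\mathbb{F}_2^n$ and $y\in T(G,C_0)$ with $d_H(x,y)\le\alpha n$, and let $F=F(x,y)$. Then $$c|F|\ge|U(x)|\ge|N_{\le d_0-1}(F)|\ge\frac{\delta d_0-1}{d_0-1}\cdot c|F|.$$
   Context: A bipartite graph is $(c,d)$-regular if left degrees are $c$ and right degrees $d$. $N(S)$ is the neighborhood of $S$, $N_i(S)$ the set of vertices adjacent to exactly $i$ vertices of $S$, and $N_{\le t}(S)=\bigcup_{1\le j\le t}N_j(S)$. A $(c,d,\alpha,\delta)$-bipartite expander is a $(c,d)$-regular bipartite graph with $|N(S)|\ge\delta c|S|$ for every $S\subseteq L$ with $|S|\le\alpha|L|$. Tanner code: $L=[n]$, for each $v\in R$ a fixed ordering of $N(v)$ defines the restriction $x_{N(v)}\in\mathbb{F}_2^d$, and $T(G,C_0)=\{x\in\mathbb{F}_2^n: x_{N(v)}\in C_0\ \forall v\in R\}$. $F(x,y)=\{i\in[n]:x_i\ne y_i\}$ and $U(x)=\{v\in R:x_{N(v)}\notin C_0\}$. *)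

From mathcomp Require Import all_boot all_order all_algebra.
Set Implicit Arguments. Unset Strict Implicit. Unset Printing Implicit Defensive.
Import Order.TTheory GRing.Theory Num.Theory.
Local Open Scope ring_scope.

Section Graph.
Variables (L R : finType) (adj : L -> R -> bool).

Definition nbh (S : {set L}) : {set R} := [set v | [exists u in S, adj u v]].
Definition deg_in (S : {set L}) (v : R) : nat := #|[set u in S | adj u v]|.
Definition Nexact (S : {set L}) (i : nat) : {set R} := [set v | deg_in S v == i].
Definition Nle (S : {set L}) (t : nat) : {set R} :=
  [set v | (0 < deg_in S v)%N && (deg_in S v <= t)%N].

Definition biregular (c d : nat) : Prop :=
  (forall u : L, #|[set v | adj u v]| = c) /\ (forall v : R, #|[set u | adj u v]| = d).

Definition bip_expander (K : realFieldType) (c d : nat) (alpha delta : K) : Prop :=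
  biregular c d /\
  forall S : {set L}, (#|S|%:R <= alpha * #|L|%:R) ->
    delta * c%:R * #|S|%:R <= #|nbh S|%:R.

(* ord v is a fixed ordering (bijection 'I_d -> N(v)) of the neighbourhood of v *)
Definition nbh_ordering (d : nat) (ord : R -> 'I_d -> L) : Prop :=
  forall v, injective (ord v) /\ forall u, adj u v <-> exists j, ord v j = u.
End Graph.

Definition wt (m : nat) (w : 'rV['F_2]_m) : nat := #|[set j | w 0 j != 0]|.

Definition is_linear_code (m : nat) (C0 : {set 'rV['F_2]_m}) : Prop :=
  0 \in C0 /\ (forall a b, a \in C0 -> b \in C0 -> a + b \in C0) /\
  (forall (k : 'F_2) a, a \in C0 -> k *: a \in C0).

(* minimum distance of a linear code = minimum weight of a nonzero codeword *)
Definition min_dist (m : nat) (C0 : {set 'rV['F_2]_m}) (d0 : nat) : Prop :=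
  (exists w, [/\ w \in C0, w != 0 & wt w = d0]) /\
  (forall w, w \in C0 -> w != 0 -> (d0 <= wt w)%N).

Definition restr (n d : nat) (R : finType) (ord : R -> 'I_d -> 'I_n)
  (x : 'rV['F_2]_n) (v : R) : 'rV['F_2]_d := \row_(j < d) x 0 (ord v j).

Definition tanner (n d : nat) (R : finType) (ord : R -> 'I_d -> 'I_n)
  (C0 : {set 'rV['F_2]_d}) : {set 'rV['F_2]_n} :=
  [set x | [forall v : R, restr ord x v \in C0]].

Definition Fdiff (n : nat) (x y : 'rV['F_2]_n) : {set 'I_n} := [set i | x 0 i != y 0 i].
Definition dH (n : nat) (x y : 'rV['F_2]_n) : nat := #|Fdiff x y|.

Definition Uset (n d : nat) (R : finType) (ord : R -> 'I_d -> 'I_n)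
  (C0 : {set 'rV['F_2]_d}) (x : 'rV['F_2]_n) : {set R} :=
  [set v | restr ord x v \notin C0].

(* Since y is a codeword, x_{N(v)} - y_{N(v)} is a local difference of weight deg_F(v), the number
   of neighbours of v in F.  Hence violated checks lie in N(F), and a check with
   1 <= deg_F(v) <= d0 - 1 is violated because no nonzero codeword of C0 is that light.  Double
   counting the c|F| edges leaving F gives d0 |N(F)| <= c|F| + (d0 - 1) |N_{<= d0-1}(F)|, which
   together with the expansion |N(F)| >= delta c |F| yields the lower bound. *)
From mathcomp Require Import all_boot all_order all_algebra.
From mathcomp Require Import zify lra.
Import Order.TTheory GRing.Theory Num.Theory.
Local Open Scope ring_scope.

Section DegreeCounting.
Context {L R : finType} (adj : L -> R -> bool).

Lemma mem_nbh (S : {set L}) (v : R) : (v \in nbh adj S) = (0 < deg_in adj S v)%N.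
Proof.
rewrite inE /deg_in card_gt0; apply/existsP/set0Pn => [[u hu]|[u]].
  by exists u; rewrite inE.
by rewrite inE => hu; exists u.
Qed.

Lemma sum_deg_in_regular (S : {set L}) (c : nat) :
  (forall u, #|[set v | adj u v]| = c) -> (\sum_v deg_in adj S v)%N = (c * #|S|)%N.
Proof.
move=> regL; rewrite /deg_in.
under eq_bigr => v _ do rewrite -sum1_card big_mkcond /=.
rewrite exchange_big /= -sum1_card big_distrr [RHS]big_mkcond /=.
apply: eq_bigr => u _; case: (boolP (u \in S)) => uS; last first.
  by rewrite big1 // => v _; rewrite inE (negbTE uS).
rewrite muln1 -(regL u) -sum1_card [RHS]big_mkcond.
by apply: eq_bigr => v _; rewrite !inE uS.
Qed.

Lemma card_nbh_le_sum (S : {set L}) : (#|nbh adj S| <= \sum_v deg_in adj S v)%N.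
Proof.
rewrite -sum1_card big_mkcond /=; apply: leq_sum => v _.
by rewrite mem_nbh; case: ifP.
Qed.

(* Pointwise, a neighbour of degree k contributes d0 on the left and k, plus d0 - 1 when
   k <= d0 - 1, on the right. *)
Lemma card_nbh_double_count (S : {set L}) (d0 : nat) :
  (d0 * #|nbh adj S| <= \sum_v deg_in adj S v + (d0 - 1) * #|Nle adj S (d0 - 1)|)%N.
Proof.
rewrite -!sum1_card !big_distrr /= [X in (_ <= _ + X)%N]big_mkcond
  [X in (X <= _)%N]big_mkcond -big_split /=.
apply: leq_sum => v _; rewrite mem_nbh inE !muln1.
case: (posnP (deg_in adj S v)) => [-> // | deg_gt0].
by case: (leqP (deg_in adj S v) (d0 - 1)) => /= deg_le; lia.
Qed.

End DegreeCounting.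

Lemma wt_eq0 (m : nat) (w : 'rV['F_2]_m) : (wt w == 0)%N = (w == 0).
Proof.
rewrite /wt cards_eq0; apply/eqP/eqP => [w0|->].
  apply/rowP => j; rewrite mxE; apply/eqP.
  by apply: contraFT (in_set0 j) => wj; rewrite -w0 inE.
by apply/setP => j; rewrite !inE mxE eqxx.
Qed.

Lemma linear_code_sub {m : nat} {C0 : {set 'rV['F_2]_m}} {a b : 'rV['F_2]_m} :
  is_linear_code C0 -> a \in C0 -> b \in C0 -> a - b \in C0.
Proof.
by move=> [_ [addC scaleC]] aC bC; rewrite -scaleN1r; apply: addC => //; apply: scaleC.
Qed.

Section TannerCode.
Variables (n d : nat) (R : finType) (adj : 'I_n -> R -> bool) (ord : R -> 'I_d -> 'I_n).
Variable C0 : {set 'rV['F_2]_d}.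
Hypothesis ord_adj : nbh_ordering adj ord.

Lemma wt_restr_sub (x y : 'rV['F_2]_n) (v : R) :
  wt (restr ord x v - restr ord y v) = deg_in adj (Fdiff x y) v.
Proof.
have [ord_inj mem_ord] := ord_adj v; rewrite /deg_in.
have -> : [set u in Fdiff x y | adj u v] = ord v @: [set j | ord v j \in Fdiff x y].
  apply/setP => u; rewrite !inE; apply/andP/imsetP => [[uF /mem_ord [j jE]]|[j]].
    by exists j; rewrite ?inE jE.
  by rewrite !inE => jF ->; split => //; apply/mem_ord; exists j.
rewrite card_imset //; apply: eq_card => j.
by rewrite !inE !mxE subr_eq0.
Qed.

Variables (x y : 'rV['F_2]_n).
Hypothesis y_tanner : y \in tanner ord C0.

Let restr_y_code v : restr ord y v \in C0.
Proof. by move: y_tanner; rewrite inE => /forallP. Qed.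

Lemma Uset_sub_nbh : Uset ord C0 x \subset nbh adj (Fdiff x y).
Proof.
apply/subsetP => v; rewrite inE => xv_notin.
have xy_neq : restr ord x v - restr ord y v != 0.
  by rewrite subr_eq0; apply: contraNneq xv_notin => ->.
by rewrite mem_nbh -wt_restr_sub lt0n wt_eq0.
Qed.

Lemma Nle_sub_Uset (d0 : nat) :
  is_linear_code C0 -> (forall w, w \in C0 -> w != 0 -> (d0 <= wt w)%N) ->
  Nle adj (Fdiff x y) (d0 - 1) \subset Uset ord C0 x.
Proof.
move=> linC min_wt; apply/subsetP => v; rewrite !inE -wt_restr_sub => /andP[wt_gt0 wt_le].
apply: contraTN wt_le => xv_code; rewrite -ltnNge.
have := min_wt _ (linear_code_sub linC xv_code (restr_y_code v)).
by rewrite -wt_eq0 -lt0n => /(_ wt_gt0); lia.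
Qed.

End TannerCode.

Lemma expansion_lower_bound (K : realFieldType) (d0 : nat) (delta s N m : K) :
  (1 < d0)%N -> 0 <= s -> delta * s <= N -> d0%:R * N <= s + (d0 - 1)%:R * m ->
  (delta * d0%:R - 1) / (d0 - 1)%:R * s <= m.
Proof.
move=> d0_gt1 s_ge0 expand count.
have t_gt0 : (0 : K) < (d0 - 1)%:R by rewrite ltr0n subn_gt0.
rewrite mulrAC ler_pdivrMr //.
have : d0%:R * (delta * s) <= d0%:R * N by rewrite ler_wpM2l.
lra.
Qed.

Theorem lemma2p7 (K : realFieldType) (n : nat) (R : finType) (c d : nat)
  (alpha delta : K) (adj : 'I_n -> R -> bool) (ord : R -> 'I_d -> 'I_n)
  (C0 : {set 'rV['F_2]_d}) (d0 : nat) (x y : 'rV['F_2]_n) :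
  bip_expander adj c d alpha delta ->
  nbh_ordering adj ord ->
  is_linear_code C0 -> min_dist C0 d0 -> (2 <= d0)%N ->
  y \in tanner ord C0 ->
  (dH x y)%:R <= alpha * n%:R ->
  [/\ (#|Uset ord C0 x| <= c * #|Fdiff x y|)%N,
      (#|Nle adj (Fdiff x y) (d0 - 1)| <= #|Uset ord C0 x|)%N &
      (delta * d0%:R - 1) / (d0 - 1)%:R * (c * #|Fdiff x y|)%:R
        <= #|Nle adj (Fdiff x y) (d0 - 1)|%:R ].
Proof.
move=> [[regL _] expand] ord_adj linC [_ min_wt] d0_gt1 y_tanner dist_xy.
set F := Fdiff x y.
have sum_deg := sum_deg_in_regular adj F c regL.
have expand_F : delta * (c * #|F|)%:R <= #|nbh adj F|%:R.
  by rewrite natrM mulrA; apply: expand; rewrite card_ord; exact: dist_xy.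
have count := card_nbh_double_count adj F d0.
rewrite sum_deg -(ler_nat K) natrD (natrM _ d0) (natrM _ (d0 - 1)) in count.
split.
- rewrite -sum_deg; apply: leq_trans (card_nbh_le_sum adj F).
  exact/subset_leq_card/Uset_sub_nbh.
- exact/subset_leq_card/Nle_sub_Uset.
- by apply: expansion_lower_bound d0_gt1 _ expand_F count.
Qed.
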